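(* Let $r,\sigma,s,c,\lambda,a,q,d,\gamma,b>0$ with $a<\lambda$, $b<\gamma$, $1-\lambda r>0$, $1-br>0$, and $\theta=\sqrt{2r/\sigma^2}$. For $w>1$ let $$G(w)=\frac{(1-\lambda r)\big((\ln w-1)w^2+\ln w+1\big)-cr\theta(w^2+1)}{\theta(1-ar)(w-1)^2}+\frac{s}{1-ar}-\frac{q}{1-br}-\frac{w+1}{\theta(w-1)}-\frac{2\big(\theta rd-(1-\gamma r)\ln w\big)w}{\theta(1-br)(w-1)^2}.$$ Assume there exists $\hat w>1$ with $G(\hat w)=0$ and $$(1-\lambda r)(\hat w-\hat w\ln\hat w-1)+cr\theta\hat w>0.$$ Let $\bar x_2=\frac{q}{1-br}+\frac{\hat w+1}{\theta(\hat w-1)}+\frac{2(\theta rd-(1-\gamma r)\ln\hat w)\hat w}{\theta(1-br)(\hat w-1)^2}$, $\bar x_1=\bar x_2-\frac{\ln\hat w}{\theta}$, $$C_{11}=\frac{e^{-\theta\bar x_1}}{2}\Big[(a-\lambda)\bar x_2-\Big(\bar x_1+\frac1\theta\Big)\frac{1-\lambda r}{r}-c+\frac sr\Big],\quad C_{12}=\frac{e^{\theta\bar x_1}}{2}\Big[(a-\lambda)\bar x_2-\Big(\bar x_1-\frac1\theta\Big)\frac{1-\lambda r}{r}-c+\frac sr\Big],$$ $\varphi_1(x)=C_{11}e^{\theta x}+C_{12}e^{-\theta x}+\frac{x-s}{r}$, and $$W_1(x)=\begin{cases}ax & x\ge\bar x_2\\ \varphi_1(x)&\bar x_1<x<\bar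 x_2\\ a\bar x_2-c-\lambda(\bar x_2-x)&x\le\bar x_1.\end{cases}$$ For $x\in\mathbb{R}$ let $\mathcal{M}W_1(x)=\sup_{\delta\ge0}\{W_1(x+\delta)-c-\lambda\delta\}$. Then for each $x$ the maximizer over $\delta\ge0$ of $W_1(x+\delta)-c-\lambda\delta$ is unique and equals $\delta(x)=(\bar x_2-x)\mathbf{1}_{(-\infty,\bar x_2]}(x)$, and $$\{\mathcal{M}W_1-W_1<0\}=(\bar x_1,\infty),\qquad\{\mathcal{M}W_1-W_1=0\}=(-\infty,\bar x_1].$$
   Context: This is the candidate equilibrium payoff of player P1 in the second type of Nash equilibrium (P1 forces P2 to stop) of a linear impulse controller–stopper game: state $X_t=x+\sigma W_t+\sum_{\tau_n\le t}\delta_n$, P1 pays $c+\lambda|\delta|$ per impulse $\delta\ge0$, receives running payoff $x-s$ and terminal payoff $ax$, discounted at rate $r$. *)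

From Stdlib Require Import Reals Lra.
From Coquelicot Require Import Coquelicot.
Open Scope R_scope.

Definition theta (r sigma : R) : R := sqrt (2 * r / sigma ^ 2).

Definition Gfun (r sigma s c lam a q d gam b w : R) : R :=
  let th := theta r sigma in
  ((1 - lam * r) * ((ln w - 1) * w ^ 2 + ln w + 1) - c * r * th * (w ^ 2 + 1))
     / (th * (1 - a * r) * (w - 1) ^ 2)
  + s / (1 - a * r) - q / (1 - b * r) - (w + 1) / (th * (w - 1))
  - 2 * (th * r * d - (1 - gam * r) * ln w) * w / (th * (1 - b * r) * (w - 1) ^ 2).

Definition xbar2 (r sigma q d gam b w : R) : R :=
  let th := theta r sigma in
  q / (1 - b * r) + (w + 1) / (th * (w - 1))
  + 2 * (th * r * d - (1 - gam * r) * ln w) * w / (th * (1 - b * r) * (w - 1) ^ 2).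

Definition xbar1 (r sigma q d gam b w : R) : R :=
  xbar2 r sigma q d gam b w - ln w / theta r sigma.

Definition C11 (r sigma s c lam a q d gam b w : R) : R :=
  let th := theta r sigma in
  let x1 := xbar1 r sigma q d gam b w in
  let x2 := xbar2 r sigma q d gam b w in
  exp (- th * x1) / 2 *
  ((a - lam) * x2 - (x1 + 1 / th) * ((1 - lam * r) / r) - c + s / r).

Definition C12 (r sigma s c lam a q d gam b w : R) : R :=
  let th := theta r sigma in
  let x1 := xbar1 r sigma q d gam b w in
  let x2 := xbar2 r sigma q d gam b w in
  exp (th * x1) / 2 *
  ((a - lam) * x2 - (x1 - 1 / th) * ((1 - lam * r) / r) - c + s / r).

Definition phi1 (r sigma s c lam a q d gam b w x : R) : R :=
  let th := theta r sigma in
  C11 r sigma s c lam a q d gam b w * exp (th * x)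
  + C12 r sigma s c lam a q d gam b w * exp (- th * x) + (x - s) / r.

Definition W1 (r sigma s c lam a q d gam b w x : R) : R :=
  let x1 := xbar1 r sigma q d gam b w in
  let x2 := xbar2 r sigma q d gam b w in
  if Rle_dec x2 x then a * x
  else if Rlt_dec x1 x then phi1 r sigma s c lam a q d gam b w x
  else a * x2 - c - lam * (x2 - x).

Definition MW1 (r sigma s c lam a q d gam b w x : R) : Rbar :=
  Lub_Rbar (fun y => exists delta, 0 <= delta /\
     y = W1 r sigma s c lam a q d gam b w (x + delta) - c - lam * delta).

Definition delta_opt (r sigma q d gam b w x : R) : R :=
  if Rle_dec x (xbar2 r sigma q d gam b w) then xbar2 r sigma q d gam b w - x else 0.

From Stdlib Require Import Reals Lra.
From Coquelicot Require Import Coquelicot.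
Open Scope R_scope.

(* With g := W1 - lam * id, the objective W1 (x + delta) - c - lam * delta equals
   g (x + delta) + lam * x - c, so choosing delta >= 0 means maximising g on [x, +oo).
   Left of xbar1, W1 has slope lam and g is the constant g(xbar2) - c; right of xbar2,
   g has slope a - lam < 0.  On [xbar1, xbar2], phi1 meets both outer pieces
   continuously (at xbar2 this is the equation G(w) = 0) and phi1' > lam inside: with
   t = exp (theta (y - xbar1)) in (1, w), phi1' - lam = (t - 1) l(t) / (2 r t) for an
   affine l, and once G(w) = 0 eliminates xbar2, l(w) > 0 reduces to the hypothesis
   on w.  So g increases from g(xbar2) - c to
   its strict maximum g(xbar2), the maximiser is max x xbar2, and
   MW1 - W1 = g (max x xbar2) - c - g x vanishes exactly on (-oo, xbar1]. *)

Lemma Lub_Rbar_attained (P : R -> Prop) (f : R -> R) (d0 : R) :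
  P d0 -> (forall d, P d -> f d <= f d0) ->
  Lub_Rbar (fun y => exists d, P d /\ y = f d) = Finite (f d0).
Proof.
  intros Pd0 f_le. apply is_lub_Rbar_unique. split.
  - intros y [d [Pd ->]]. exact (f_le d Pd).
  - intros u u_ub. apply u_ub. now exists d0.
Qed.

Lemma strict_increasing_on_closed (f df : R -> R) (u v : R) :
  (forall z, derivable_pt_lim f z (df z)) -> (forall z, u < z < v -> 0 < df z) ->
  forall y z, u <= y -> y < z -> z <= v -> f y < f z.
Proof.
  intros f_deriv df_pos y z u_le y_lt z_le.
  destruct (MVT_cor2 f df y z y_lt (fun t _ => f_deriv t)) as [t [f_diff t_in]].
  assert (0 < df t * (z - y)) by (apply Rmult_lt_0_compat; [apply df_pos |]; lra).
  lra.
Qed.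

Definition push_to (x2 x : R) : R := if Rle_dec x x2 then x2 - x else 0.

Definition impulse (W : R -> R) (c lam x : R) : Rbar :=
  Lub_Rbar (fun y => exists delta, 0 <= delta /\ y = W (x + delta) - c - lam * delta).

Section ImpulseOperator.

Variables (W : R -> R) (c lam x1 x2 : R).

Let g y := W y - lam * y.

Hypotheses (c_pos : 0 < c)
  (g_left : forall y, y <= x1 -> g y = g x2 - c)
  (g_between : forall y, x1 < y < x2 -> g x2 - c < g y < g x2)
  (g_right : forall y z, x2 <= y < z -> g z < g y).

Lemma g_lt_peak y : y <> x2 -> g y < g x2.
Proof.
  intros y_ne. destruct (Rlt_or_le x2 y) as [y_gt | y_le].
  - apply g_right. lra.
  - destruct (Rlt_or_le x1 y) as [y_gt1 | y_le1].
    + apply g_between. lra.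
    + rewrite g_left by exact y_le1. lra.
Qed.

Lemma push_to_argmax x :
  0 <= push_to x2 x /\
  forall delta, 0 <= delta -> delta <> push_to x2 x ->
    W (x + delta) - c - lam * delta <
    W (x + push_to x2 x) - c - lam * push_to x2 x.
Proof.
  unfold push_to. destruct (Rle_dec x x2) as [x_le | x_gt].
  - split; [lra |]. intros delta _ delta_ne.
    assert (g (x + delta) < g x2) by (apply g_lt_peak; lra).
    replace (x + (x2 - x)) with x2 by ring. unfold g in *. lra.
  - split; [lra |]. intros delta delta_ge delta_ne.
    assert (g (x + delta) < g x) by (apply g_right; lra).
    rewrite Rplus_0_r. unfold g in *. lra.
Qed.

Lemma impulse_push_to x :
  impulse W c lam x = Finite (W (x + push_to x2 x) - c - lam * push_to x2 x).
Proof.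
  destruct (push_to_argmax x) as [push_ge push_max].
  apply (Lub_Rbar_attained (fun d => 0 <= d) (fun d => W (x + d) - c - lam * d)).
  - exact push_ge.
  - intros delta delta_ge.
    destruct (Req_dec delta (push_to x2 x)) as [-> | delta_ne]; [lra |].
    apply Rlt_le, push_max; assumption.
Qed.

Lemma push_to_value_eq x : x <= x1 ->
  W (x + push_to x2 x) - c - lam * push_to x2 x = W x.
Proof.
  intros x_le. assert (x1 < x2) by (pose proof (g_left x2); lra).
  unfold push_to. destruct (Rle_dec x x2) as [_ | x_gt]; [| lra].
  replace (x + (x2 - x)) with x2 by ring.
  pose proof (g_left x x_le). unfold g in *. lra.
Qed.

Lemma push_to_value_lt x : x1 < x ->
  W (x + push_to x2 x) - c - lam * push_to x2 x < W x.
Proof.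
  intros x_gt. unfold push_to. destruct (Rle_dec x x2) as [x_le | _].
  - replace (x + (x2 - x)) with x2 by ring.
    destruct (Req_dec x x2) as [-> | x_ne]; [lra |].
    assert (g x2 - c < g x) by (apply g_between; lra). unfold g in *. lra.
  - rewrite Rplus_0_r. lra.
Qed.

Lemma impulse_lt_iff x : Rbar_lt (impulse W c lam x) (W x) <-> x1 < x.
Proof.
  rewrite impulse_push_to. simpl. split; intros H.
  - destruct (Rlt_or_le x1 x) as [x_gt | x_le]; [exact x_gt |].
    rewrite push_to_value_eq in H; lra.
  - now apply push_to_value_lt.
Qed.

Lemma impulse_eq_iff x : impulse W c lam x = Finite (W x) <-> x <= x1.
Proof.
  rewrite impulse_push_to. split; intros H.
  - injection H as H. destruct (Rlt_or_le x1 x) as [x_gt | x_le]; [| exact x_le].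
    pose proof (push_to_value_lt x x_gt). lra.
  - now rewrite push_to_value_eq.
Qed.

End ImpulseOperator.

Lemma theta_pos r sigma : 0 < r -> 0 < sigma -> 0 < theta r sigma.
Proof.
  intros r_pos sigma_pos. apply sqrt_lt_R0, Rdiv_lt_0_compat; [lra |].
  apply pow_lt. exact sigma_pos.
Qed.

Section ContinuationRegion.

Variables (r sigma s c lam a q d gam b w : R).

Local Notation th := (theta r sigma).
Local Notation x1 := (xbar1 r sigma q d gam b w).
Local Notation x2 := (xbar2 r sigma q d gam b w).
Local Notation phi := (phi1 r sigma s c lam a q d gam b w).
Local Notation W := (W1 r sigma s c lam a q d gam b w).
Local Notation A := ((a - lam) * x2 - (x1 + 1 / th) * ((1 - lam * r) / r) - c + s / r).
Local Notation B := ((a - lam) * x2 - (x1 - 1 / th) * ((1 - lam * r) / r) - c + s / r).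

Hypotheses (r_pos : 0 < r) (sigma_pos : 0 < sigma) (a_lt_lam : a < lam)
  (lam_r_lt1 : 1 - lam * r > 0) (w_gt1 : 1 < w)
  (G_root : Gfun r sigma s c lam a q d gam b w = 0)
  (w_cond : (1 - lam * r) * (w - w * ln w - 1) + c * r * theta r sigma * w > 0).

Let th_pos : 0 < th := theta_pos r sigma r_pos sigma_pos.

Lemma a_r_lt1 : 1 - a * r > 0.
Proof. nra. Qed.

Lemma ln_w_pos : 0 < ln w.
Proof. rewrite <- ln_1. apply ln_increasing; lra. Qed.

Lemma theta_xbar_gap : th * (x2 - x1) = ln w.
Proof. unfold xbar1. field. lra. Qed.

Lemma exp_theta_xbar_gap : exp (th * (x2 - x1)) = w.
Proof. rewrite theta_xbar_gap. apply exp_ln. lra. Qed.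

Lemma xbar1_lt_xbar2 : x1 < x2.
Proof. pose proof ln_w_pos. pose proof theta_xbar_gap. nra. Qed.

Lemma xbar2_G_root :
  x2 = ((1 - lam * r) * ((ln w - 1) * w ^ 2 + ln w + 1) - c * r * th * (w ^ 2 + 1))
         / (th * (1 - a * r) * (w - 1) ^ 2) + s / (1 - a * r).
Proof. unfold Gfun in G_root. unfold xbar2. cbv zeta in *. lra. Qed.

Lemma phi1_centered y :
  phi y = A / 2 * exp (th * (y - x1)) + B / 2 * exp (- (th * (y - x1))) + (y - s) / r.
Proof.
  unfold phi1, C11, C12. cbv zeta.
  replace (th * (y - x1)) with (- th * x1 + th * y) by ring.
  replace (- (- th * x1 + th * y)) with (th * x1 + - th * y) by ring.
  rewrite !exp_plus. field. split; lra.
Qed.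

Lemma phi1_xbar1 : phi x1 = a * x2 - c - lam * (x2 - x1).
Proof.
  rewrite phi1_centered, Rminus_diag, Rmult_0_r, Ropp_0, exp_0. field. lra.
Qed.

Lemma phi1_xbar2 : phi x2 = a * x2.
Proof.
  pose proof a_r_lt1.
  rewrite phi1_centered, exp_Ropp, exp_theta_xbar_gap.
  unfold xbar1. rewrite xbar2_G_root. field. repeat split; lra.
Qed.

Let slope t := th * (A / 2 * t - B / 2 / t) + 1 / r.

Lemma phi1_derive y : derivable_pt_lim phi y (slope (exp (th * (y - x1)))).
Proof.
  apply is_derive_Reals.
  apply (is_derive_ext (fun z => A / 2 * exp (th * (z - x1))
           + B / 2 * exp (- (th * (z - x1))) + (z - s) / r)).
  { intros z. symmetry. apply phi1_centered. }
  auto_derive; [easy |]. replace (y + - x1) with (y - x1) by ring.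
  pose proof (exp_pos (th * (y - x1))). unfold slope. rewrite exp_Ropp.
  field. repeat split; lra.
Qed.

Let kappa := r * th * (A + B) / 2.

(* The factor t - 1 is the smooth fit phi1'(xbar1) = lam: C11 and C12 are chosen so
   that A - B = - 2 (1 - lam r) / (r th). *)
Lemma slope_sub_lam_factor t : 0 < t ->
  slope t - lam = (t - 1) * (kappa * (t + 1) - (1 - lam * r) * (t - 1)) / (2 * t * r).
Proof. intros t_pos. unfold slope, kappa. field. repeat split; lra. Qed.

Lemma kappa_G_root :
  kappa * (w - 1) ^ 2 = (1 - lam * r) * (w ^ 2 - 1 - 2 * ln w * w) + 2 * c * r * th * w.
Proof.
  pose proof a_r_lt1.
  unfold kappa, xbar1. rewrite xbar2_G_root. field. repeat split; lra.
Qed.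

Lemma kappa_factor_at_w : kappa * (w + 1) - (1 - lam * r) * (w - 1) > 0.
Proof.
  assert (w1_sq : 0 < (w - 1) ^ 2) by (apply pow_lt; lra).
  assert (factor_w : (kappa * (w + 1) - (1 - lam * r) * (w - 1)) * (w - 1) ^ 2
    = 2 * (w + 1) * ((1 - lam * r) * (w - w * ln w - 1) + c * r * th * w)
      + 2 * (1 - lam * r) * (w - 1) ^ 2).
  { replace ((kappa * (w + 1) - (1 - lam * r) * (w - 1)) * (w - 1) ^ 2)
      with ((w + 1) * (kappa * (w - 1) ^ 2) - (1 - lam * r) * (w - 1) ^ 3) by ring.
    rewrite kappa_G_root. ring. }
  apply (Rmult_lt_reg_r ((w - 1) ^ 2)); [exact w1_sq |].
  rewrite Rmult_0_l, factor_w. nra.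
Qed.

Lemma slope_gt_lam t : 1 < t < w -> lam < slope t.
Proof.
  intros t_in. pose proof kappa_factor_at_w.
  (* the second factor is affine in t, and positive at t = 1 and at t = w *)
  assert (kappa * (t + 1) - (1 - lam * r) * (t - 1) > 0) by nra.
  enough (0 < slope t - lam) by lra.
  rewrite slope_sub_lam_factor by lra. apply Rdiv_lt_0_compat; nra.
Qed.

Lemma phi1_sub_lam_increasing y z : x1 <= y -> y < z -> z <= x2 ->
  phi y - lam * y < phi z - lam * z.
Proof.
  apply (strict_increasing_on_closed (fun y => phi y - lam * y)
    (fun y => slope (exp (th * (y - x1))) - lam)).
  - intros u. apply derivable_pt_lim_minus; [apply phi1_derive |].
    replace lam with (lam * 1) at 2 by ring. apply derivable_pt_lim_scal, derivable_pt_lim_id.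
  - intros u u_in. enough (lam < slope (exp (th * (u - x1)))) by lra.
    apply slope_gt_lam. split.
    + rewrite <- exp_0. apply exp_increasing. nra.
    + apply Rlt_le_trans with (exp (th * (x2 - x1))).
      * apply exp_increasing. nra.
      * right. exact exp_theta_xbar_gap.
Qed.

Lemma W1_ge_xbar2 y : x2 <= y -> W y = a * y.
Proof. intros y_ge. unfold W1. cbv zeta. now destruct (Rle_dec x2 y). Qed.

Lemma W1_between y : x1 < y < x2 -> W y = phi y.
Proof.
  intros y_in. unfold W1. cbv zeta.
  destruct (Rle_dec x2 y); [lra |]. destruct (Rlt_dec x1 y); [easy | lra].
Qed.

Lemma W1_le_xbar1 y : y <= x1 -> W y = a * x2 - c - lam * (x2 - y).
Proof.
  intros y_le. pose proof xbar1_lt_xbar2. unfold W1. cbv zeta.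
  destruct (Rle_dec x2 y); [lra |]. destruct (Rlt_dec x1 y); [lra | easy].
Qed.

Lemma W1_sub_lam_left y : y <= x1 -> W y - lam * y = W x2 - lam * x2 - c.
Proof. intros y_le. rewrite (W1_le_xbar1 y), (W1_ge_xbar2 x2) by lra. ring. Qed.

Lemma W1_sub_lam_between y : x1 < y < x2 ->
  W x2 - lam * x2 - c < W y - lam * y < W x2 - lam * x2.
Proof.
  intros y_in. rewrite (W1_between y), (W1_ge_xbar2 x2) by lra.
  pose proof (phi1_sub_lam_increasing x1 y). pose proof (phi1_sub_lam_increasing y x2).
  rewrite phi1_xbar1, phi1_xbar2 in *. lra.
Qed.

Lemma W1_sub_lam_right y z : x2 <= y < z -> W z - lam * z < W y - lam * y.
Proof. intros yz. rewrite !W1_ge_xbar2 by lra. nra. Qed.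

End ContinuationRegion.

Theorem lemmaA3 (r sigma s c lam a q d gam b w : R) :
  0 < r -> 0 < sigma -> 0 < s -> 0 < c -> 0 < lam -> 0 < a -> 0 < q ->
  0 < d -> 0 < gam -> 0 < b ->
  a < lam -> b < gam -> 1 - lam * r > 0 -> 1 - b * r > 0 ->
  1 < w ->
  Gfun r sigma s c lam a q d gam b w = 0 ->
  (1 - lam * r) * (w - w * ln w - 1) + c * r * theta r sigma * w > 0 ->
  (forall x : R,
     0 <= delta_opt r sigma q d gam b w x /\
     forall delta : R, 0 <= delta -> delta <> delta_opt r sigma q d gam b w x ->
       W1 r sigma s c lam a q d gam b w (x + delta) - c - lam * delta <
       W1 r sigma s c lam a q d gam b w (x + delta_opt r sigma q d gam b w x) - c
         - lam * delta_opt r sigma q d gam b w x) /\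
  (forall x : R,
     Rbar_lt (MW1 r sigma s c lam a q d gam b w x) (Finite (W1 r sigma s c lam a q d gam b w x))
     <-> xbar1 r sigma q d gam b w < x) /\
  (forall x : R,
     MW1 r sigma s c lam a q d gam b w x = Finite (W1 r sigma s c lam a q d gam b w x)
     <-> x <= xbar1 r sigma q d gam b w).
Proof.
  intros r_pos sigma_pos _ c_pos _ _ _ _ _ _ a_lt_lam _ lam_r_lt1 _ w_gt1 G_root w_cond.
  change (delta_opt r sigma q d gam b w) with (push_to (xbar2 r sigma q d gam b w)).
  change (MW1 r sigma s c lam a q d gam b w)
    with (impulse (W1 r sigma s c lam a q d gam b w) c lam).
  split; [| split]; intros x.
  - eapply push_to_argmax; eauto using W1_sub_lam_left, W1_sub_lam_between, W1_sub_lam_right.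
  - eapply impulse_lt_iff; eauto using W1_sub_lam_left, W1_sub_lam_between, W1_sub_lam_right.
  - eapply impulse_eq_iff; eauto using W1_sub_lam_left, W1_sub_lam_between, W1_sub_lam_right.
Qed.
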